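(* Assume $\Delta=0$. Let $\lambda_1,\lambda_2,\lambda_3\in K$ be such that $\lambda_ic_i\in N$ for $i=1,2,3$, and let $s_i':=s_i\,\nu_i\in G$, where $\nu_i\in N$ is the element corresponding to $\lambda_ic_i$. Then for every integer $n\ge1$: (1) $(s_1's_2')^n=(s_1s_2)^n\,b_n$ with $b_n\in N$ given by $b_n=u_n(\alpha)\big[(\alpha u_n(\alpha)\lambda_1+u_{n-1}(\alpha)\lambda_2)c_1+\alpha(u_{n+1}(\alpha)\lambda_1+u_n(\alpha)\lambda_2)c_2\big]$ if $n$ is even, and $b_n=u_n(\alpha)\big[(u_n(\alpha)\lambda_1+u_{n-1}(\alpha)\lambda_2)c_1+(\alpha u_{n+1}(\alpha)\lambda_1+u_n(\alpha)\lambda_2)c_2\big]$ if $n$ is odd; (2) $(s_1's_3')^n=(s_1s_3)^n\,b'_n$ with $b'_n=u_n(\beta)\big[(\beta u_n(\beta)\lambda_1+u_{n-1}(\beta)\lambda_3)c_1+\beta(u_{n+1}(\beta)\lambda_1+u_n(\beta)\lambda_3)c_3\big]$ if $n$ is even, and $b'_n=u_n(\beta)\big[(u_n(\beta)\lambda_1+u_{n-1}(\beta)\lambda_3)c_1+(\beta u_{n+1}(\beta)\lambda_1+u_n(\beta)\lambda_3)c_3\big]$ if $n$ is odd; (3) $(s_2's_3')^n=(s_2s_3)^n\,b''_n$ with $b''_n=u_n(\gamma)\big[(\gamma u_n(\gamma)\lambda_2+m u_{n-1}(\gamma)\lambda_3)c_2+(l u_{n+1}(\gamma)\lambda_2+\gamma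 u_n(\gamma)\lambda_3)c_3\big]$ if $n$ is even, and $b''_n=u_n(\gamma)\big[(u_n(\gamma)\lambda_2+m u_{n-1}(\gamma)\lambda_3)c_2+(l u_{n+1}(\gamma)\lambda_2+u_n(\gamma)\lambda_3)c_3\big]$ if $n$ is odd. (Products of elements of $G$ are written multiplicatively; elements of $N$ are identified with vectors of $K^2$.)
   Context: Setting. Let $p,q,r\ge 3$ be integers and $W=W(p,q,r)$ the Coxeter group with generators $s_1,s_2,s_3$ and relations $s_i^2=1$, $(s_1s_2)^p=(s_1s_3)^q=(s_2s_3)^r=1$. Let $\alpha=4\cos^2(\pi k_1/p)$, $\beta=4\cos^2(\pi k_2/q)$, $\gamma=4\cos^2(\pi k_3/r)$ with $\gcd(k_1,p)=\gcd(k_2,q)=\gcd(k_3,r)=1$ (so $0<\alpha,\beta,\gamma<4$), and let $l,m\in\mathbb{C}$ with $lm=\gamma$. Let $K\subset\mathbb{C}$ be a field containing $\alpha,\beta,\gamma,l,m$, and $M$ a $3$-dimensional $K$-vector space with basis $(a_1,a_2,a_3)$. The reflection representation $R:W\to GL(M)$ with parameters $(\alpha,\beta,\gamma;l,m)$ is defined by: for $x=\lambda_1a_1+\lambda_2a_2+\lambda_3a_3$, $R(s_1)x=x-(2\lambda_1-\alpha\lambda_2-\beta\lambda_3)a_1$, $R(s_2)x=x-(-\lambda_1+2\lambda_2-l\lambda_3)a_2$, $R(s_3)x=x-(-\lambda_1-m\lambda_2+2\lambda_3)a_3$. Put $G=R(W)$ and write $s_i$ for $R(s_i)$. Let $\Delta=8-2\alpha-2\beta-2\gamma-(\alpha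 l+\beta m)$; $R$ is reducible iff $\Delta=0$. Reducible setting. Assume $\Delta=0$. Put $b=(4-\gamma)a_1+(l+2)a_2+(m+2)a_3$; then the space of $G$-fixed vectors is $C_M(G)=Kb$ and $(b,a_2,a_3)$ is a basis of $M$. Let $N=N(G)$ be the subgroup of elements of $G$ acting trivially on $M/C_M(G)$. Each $\zeta\in N$ satisfies $\zeta(b)=b$, $\zeta(a_2)=a_2+\lambda b$, $\zeta(a_3)=a_3+\mu b$ for a unique $(\lambda,\mu)\in K^2$; the map $\zeta\mapsto(\lambda,\mu)$ is an injective group homomorphism $N\to (K^2,+)$, through which $N$ is identified with an additive subgroup of $K^2$ (and written additively). Put $c_1=(\alpha,\beta)$, $c_2=(-2,l)$, $c_3=(m,-2)\in K^2$ and, for $\zeta=(\lambda,\mu)\in K^2$, $\omega(\zeta)=-\frac{\lambda(l+2)+\mu(m+2)}{4-\gamma}$. Polynomials $u_n$. Define $u_n\in\mathbb{Z}[X]$ for $n\ge-1$ by $u_{-1}=-1$, $u_0=0$, and for $n\ge0$: $u_{n+1}=Xu_n-u_{n-1}$ if $n$ is even, $u_{n+1}=u_n-u_{n-1}$ if $n$ is odd (so $u_1=u_2=1$, $u_3=X-1$). *)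

From HB Require Import structures.
From mathcomp Require Import all_boot all_order all_algebra.
Set Implicit Arguments. Unset Strict Implicit. Unset Printing Implicit Defensive.
Import Order.TTheory GRing.Theory Num.Theory.
Local Open Scope ring_scope.

(* Polynomials u_n (n >= -1) in Z[X]: upair n = (u_{n-1}, u_n). *)
Fixpoint upair (n : nat) : {poly int} * {poly int} :=
  match n with
  | 0 => (-1, 0)
  | n'.+1 => let (a, b) := upair n' in
             (b, if odd n' then b - a else 'X * b - a)
  end.

Definition upoly (n : nat) : {poly int} := (upair n).2.

Definition uev (R : nzRingType) (x : R) (n : nat) : R :=
  (map_poly (fun z : int => z%:~R) (upoly n)).[x].

(* M = R^3 as column vectors, basis a_1 a_2 a_3 = standard basis. *)
Definition rv3 (R : nzRingType) (a b c : R) : 'rV[R]_3 :=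
  \row_(j < 3) [:: a; b; c]`_j.

Definition refl3 (R : nzRingType) (i0 : 'I_3) (v : 'rV[R]_3) : 'M[R]_3 :=
  1%:M - delta_mx i0 (0 : 'I_1) *m v.

Definition sg1 (R : nzRingType) (al be : R) : 'M[R]_3 :=
  refl3 (inord 0) (rv3 2 (- al) (- be)).
Definition sg2 (R : nzRingType) (l : R) : 'M[R]_3 :=
  refl3 (inord 1) (rv3 (-1) 2 (- l)).
Definition sg3 (R : nzRingType) (m : R) : 'M[R]_3 :=
  refl3 (inord 2) (rv3 (-1) (- m) 2).

Inductive gen_group (R : fieldType) (S : seq 'M[R]_3) : 'M[R]_3 -> Prop :=
  | gg_gen A : A \in S -> gen_group S A
  | gg_one : gen_group S 1
  | gg_mul A B : gen_group S A -> gen_group S B -> gen_group S (A * B)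
  | gg_inv A : gen_group S A -> gen_group S (invmx A).

Definition Ggrp (R : fieldType) (al be l m : R) : 'M[R]_3 -> Prop :=
  gen_group [:: sg1 al be; sg2 l; sg3 m].

Definition bvec (R : nzRingType) (ga l m : R) : 'cV[R]_3 :=
  \col_(i < 3) [:: 4 - ga; l + 2; m + 2]`_i.

Definition Pbasis (R : nzRingType) (ga l m : R) : 'M[R]_3 :=
  \matrix_(i < 3, j < 3)
    (if j == 0 :> nat then bvec ga l m i 0 else (i == j)%:R).

(* The element of GL(M) corresponding to zeta = (lambda, mu) in K^2:
   b |-> b, a2 |-> a2 + lambda b, a3 |-> a3 + mu b. *)
Definition nuT (R : fieldType) (ga l m : R) (z : 'rV[R]_2) : 'M[R]_3 :=
  let E := \matrix_(i < 3, j < 3)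
      ((i == j)%:R
       + ((i == 0 :> nat) && (j == 1 :> nat))%:R * z 0 (inord 0)
       + ((i == 0 :> nat) && (j == 2 :> nat))%:R * z 0 (inord 1)) in
  Pbasis ga l m * E * invmx (Pbasis ga l m).

(* zeta \in N  (N identified with an additive subgroup of K^2) *)
Definition inN (R : fieldType) (al be ga l m : R) (z : 'rV[R]_2) : Prop :=
  Ggrp al be l m (nuT ga l m z).

Definition rv2 (R : nzRingType) (a b : R) : 'rV[R]_2 := \row_(j < 2) [:: a; b]`_j.
Definition c1 (R : nzRingType) (al be : R) : 'rV[R]_2 := rv2 al be.
Definition c2 (R : nzRingType) (l : R) : 'rV[R]_2 := rv2 (-2) l.
Definition c3 (R : nzRingType) (m : R) : 'rV[R]_2 := rv2 m (-2).

(* b_n, b'_n (generic form): x = alpha or beta, la = lambda_1,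
   mu = lambda_2 or lambda_3, d = c_2 or c_3 *)
Definition bn (R : nzRingType) (x la mu : R) (c d : 'rV[R]_2) (n : nat) : 'rV[R]_2 :=
  if odd n then
    uev x n *: ((uev x n * la + uev x n.-1 * mu) *: c
                + (x * uev x n.+1 * la + uev x n * mu) *: d)
  else
    uev x n *: ((x * uev x n * la + uev x n.-1 * mu) *: c
                + x *: ((uev x n.+1 * la + uev x n * mu) *: d)).

Definition bn'' (R : nzRingType) (ga l m la2 la3 : R) (n : nat) : 'rV[R]_2 :=
  if odd n then
    uev ga n *: ((uev ga n * la2 + m * uev ga n.-1 * la3) *: c2 l
                 + (l * uev ga n.+1 * la2 + uev ga n * la3) *: c3 m)
  else
    uev ga n *: ((ga * uev ga n * la2 + m * uev ga n.-1 * la3) *: c2 l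
                 + (l * uev ga n.+1 * la2 + ga * uev ga n * la3) *: c3 m).

From HB Require Import structures.
From mathcomp Require Import all_boot all_order all_algebra.
From mathcomp Require Import ring.
Import Order.TTheory GRing.Theory Num.Theory.
Set Implicit Arguments. Unset Strict Implicit. Unset Printing Implicit Defensive.
Local Open Scope ring_scope.

(* Since Delta = 0, the linear forms v_i with s_i = 1 - a_i v_i all vanish on b,
   so each s_i fixes b, and the element of N attached to zeta is the
   transvection 1 + b w, where w is the form with w(b) = 0 taking the values
   zeta on (a_2, a_3); the vector c_i corresponds to the form -v_i (this needs
   4 - gamma <> 0, i.e. (b, a_2, a_3) is a basis).  Transvections along b add
   their forms, and (1 + b w) s = s (1 + b (w s)), so
   (s nu_1 t nu_2)^n = (s t)^n (1 + b W_n) with W_(n+1) = (W_n s + w_1) t + w_2.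
   The reflections act on the span of v, v' through the Cartan matrix, which
   turns this into an inhomogeneous two-term recurrence for the coordinates of
   W_n; its solution is the u_n-formula of the statement, the inhomogeneous
   terms being absorbed by a Cassini-type identity for u_n.  Finally
   1 + b W_n = (t s)^n (s nu_1 t nu_2)^n lies in G. *)

Section UPolynomials.
Variables (R : comNzRingType) (x : R).

Definition uev_pred (n : nat) : R :=
  (map_poly (fun z : int => z%:~R) (upair n).1).[x].

Lemma upairS n : upair n.+1 = ((upair n).2,
  if odd n then (upair n).2 - (upair n).1 else 'X * (upair n).2 - (upair n).1).
Proof. by rewrite /=; case: (upair n). Qed.

Lemma uev0 : uev x 0 = 0.
Proof. by rewrite /uev /upoly /= rmorph0 horner0. Qed.

Lemma uev_pred0 : uev_pred 0 = -1.
Proof. by rewrite /uev_pred /= rmorphN rmorph1 hornerN hornerC. Qed.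

Lemma uev_predS n : uev_pred n.+1 = uev x n.
Proof. by rewrite /uev /uev_pred /upoly upairS. Qed.

Lemma uevS n :
  uev x n.+1 = if odd n then uev x n - uev_pred n else x * uev x n - uev_pred n.
Proof.
rewrite /uev /uev_pred /upoly upairS /=; case: (odd n); rewrite rmorphB hornerD hornerN //.
by rewrite rmorphM /= map_polyX mulrC hornerMX mulrC.
Qed.

Lemma uev_cassini n :
  (if odd n then uev x n ^+ 2 + x * uev_pred n ^+ 2 - x * uev_pred n * uev x n
   else x * uev x n ^+ 2 + uev_pred n ^+ 2 - x * uev_pred n * uev x n) = 1.
Proof.
elim: n => [|n IH]; first by rewrite /= uev0 uev_pred0; ring.
by rewrite uevS uev_predS /=; case: (odd n) IH => /= <-; ring.
Qed.

End UPolynomials.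

Section TwistCoords.
Variables (R : comNzRingType) (p q la1 la2 : R).

(* The coordinates of W_n on (v, v'), where -p and -q are the Cartan entries
   v'(a_i) and v(a_j); see twist_form_refl3. *)
Fixpoint twist_coords (n : nat) : R * R :=
  if n is n'.+1 then
    let: (X, Y) := twist_coords n' in
    let X' := p * Y - X + la1 in (X', q * X' - Y + la2)
  else (0, 0).

Lemma twist_coordsS n : twist_coords n.+1 =
  let X' := p * (twist_coords n).2 - (twist_coords n).1 + la1 in
  (X', q * X' - (twist_coords n).2 + la2).
Proof. by rewrite /=; case: (twist_coords n). Qed.

Local Notation u := (uev (p * q)).
Local Notation u' := (uev_pred (p * q)).

Lemma twist_coordsE n : twist_coords n =
  if odd n then (u n * (u n * la1 + p * u' n * la2),
                 u n * (q * u n.+1 * la1 + u n * la2))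
  else (u n * (p * q * u n * la1 + p * u' n * la2),
        u n * (q * u n.+1 * la1 + p * q * u n * la2)).
Proof.
elim: n => [|n IH]; first by rewrite /= uev0 mul0r mul0r.
have := uev_cassini (p * q) n.
rewrite twist_coordsS IH !uevS uev_predS /=.
have mod_cassini (I c e f : R) : I = 1 -> e - f = c * (1 - I) -> e = f.
  by move=> -> /eqP; rewrite subrr mulr0 subr_eq0 => /eqP.
case: (odd n) => /= I; congr (_, _).
- by apply: (mod_cassini _ la1 _ _ I); ring.
- by apply: (mod_cassini _ (q * la1 + la2) _ _ I); ring.
- by apply: (mod_cassini _ la1 _ _ I); ring.
- by apply: (mod_cassini _ (q * la1 + la2) _ _ I); ring.
Qed.

End TwistCoords.

Definition transv (R : nzRingType) n (b : 'cV[R]_n) (w : 'rV[R]_n) : 'M[R]_n :=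
  1%:M + b *m w.

Section Transvections.
Variables (R : comNzRingType) (n : nat) (b : 'cV[R]_n).

Lemma transvD (w w' : 'rV_n) : w *m b = 0 ->
  transv b w *m transv b w' = transv b (w + w').
Proof.
move=> wb; rewrite /transv mulmxDl !mulmxDr !mul1mx mulmx1 -mulmxA (mulmxA w) wb.
by rewrite mul0mx mulmx0 addr0 addrA addrAC.
Qed.

Lemma transv_mulmx (s : 'M_n) (w : 'rV_n) : s *m b = b ->
  transv b w *m s = s *m transv b (w *m s).
Proof. by move=> sb; rewrite /transv mulmxDl mulmxDr mul1mx mulmx1 !mulmxA sb. Qed.

End Transvections.

Section TwistedPower.
Variables (R : comNzRingType) (d : nat).
Variables (s t : 'M[R]_d.+1) (b : 'cV[R]_d.+1) (w1 w2 : 'rV[R]_d.+1).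
Hypotheses (sb : s *m b = b) (tb : t *m b = b) (w1b : w1 *m b = 0) (w2b : w2 *m b = 0).

Fixpoint twist_form n : 'rV[R]_d.+1 :=
  if n is n'.+1 then (twist_form n' *m s + w1) *m t + w2 else 0.

Lemma twist_form_bvec_eq0 n : twist_form n *m b = 0.
Proof.
elim: n => [|n IH] /=; first by rewrite mul0mx.
by rewrite mulmxDl w2b addr0 -mulmxA tb mulmxDl w1b addr0 -mulmxA sb.
Qed.

Lemma transv_twist_step (W : 'rV_d.+1) : W *m b = 0 ->
  transv b W * (s * transv b w1 * (t * transv b w2))
    = s * t * transv b ((W *m s + w1) *m t + w2).
Proof.
move=> Wb; rewrite -!mulmxE !mulmxA transv_mulmx // -(mulmxA s) transvD;
  last by rewrite -mulmxA sb.
rewrite -(mulmxA s) transv_mulmx // mulmxA -(mulmxA (s *m t)) transvD //.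
by rewrite -mulmxA tb mulmxDl w1b addr0 -mulmxA sb.
Qed.

Lemma expr_twist n : (s * transv b w1 * (t * transv b w2)) ^+ n
   = (s * t) ^+ n * transv b (twist_form n).
Proof.
elim: n => [|n IH]; first by rewrite !expr0 /transv mulmx0 addr0 mul1r.
by rewrite exprSr IH -mulrA transv_twist_step ?twist_form_bvec_eq0 // mulrA -exprSr.
Qed.

End TwistedPower.

Lemma expr_involutionsK (R : nzRingType) d (s t : 'M[R]_d.+1) n :
  s * s = 1 -> t * t = 1 -> (t * s) ^+ n * (s * t) ^+ n = 1.
Proof.
move=> ss tt; elim: n => [|n IH]; first by rewrite !expr0 mulr1.
rewrite exprSr exprS -mulrA (mulrA (t * s)) -(mulrA t) (mulrA s) ss mul1r tt mul1r.
exact: IH.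
Qed.

Section Reflections.
Variables (R : comNzRingType) (i : 'I_3) (v : 'rV[R]_3).

Lemma mul_refl3 (u : 'rV_3) : u *m refl3 i v = u - u 0 i *: v.
Proof.
by rewrite /refl3 mulmxBr mulmx1 mulmxA -colE (mx11_scalar (col i u)) mxE mul_scalar_mx.
Qed.

Lemma refl3_fixed (b : 'cV_3) : v *m b = 0 -> refl3 i v *m b = b.
Proof. by move=> vb; rewrite /refl3 mulmxBl mul1mx -mulmxA vb mulmx0 subr0. Qed.

Hypothesis hv : v 0 i = 2.

Lemma refl3_form : v *m refl3 i v = - v.
Proof. by rewrite mul_refl3 hv scaler_nat mulr2n opprD addrA subrr sub0r. Qed.

Lemma refl3_involutive : refl3 i v * refl3 i v = 1.
Proof.
by rewrite -mulmxE {1}/refl3 mulmxBl mul1mx -mulmxA refl3_form mulmxN opprK subrK.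
Qed.

End Reflections.

Section ReflectionPair.
Variables (R : comNzRingType) (i j : 'I_3) (v v' : 'rV[R]_3) (p q la1 la2 : R).
Hypotheses (hv : v 0 i = 2) (hv' : v' 0 j = 2) (hv'i : v' 0 i = - p) (hvj : v 0 j = - q).

Lemma twist_form_refl3 n :
  twist_form (refl3 i v) (refl3 j v') (- (la1 *: v)) (- (la2 *: v')) n
  = - ((twist_coords p q la1 la2 n).1 *: v + (twist_coords p q la1 la2 n).2 *: v').
Proof.
elim: n => [|n IH]; first by rewrite /= !scale0r addr0 oppr0.
rewrite twist_coordsS /= IH !(mulNmx, mulmxDl, mul_refl3).
by apply/rowP=> k; rewrite !mxE hv hv' hv'i hvj; ring.
Qed.

End ReflectionPair.

(* [w *m Pbasis] lists the values of a form w on (b, a_2, a_3). *)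
Definition tail3 (R : nzRingType) (z : 'rV[R]_2) : 'rV[R]_3 :=
  rv3 0 (z 0 (inord 0)) (z 0 (inord 1)).

Lemma tail3D (R : comNzRingType) (X Y : R) (z z' : 'rV_2) :
  tail3 (X *: z + Y *: z') = X *: tail3 z + Y *: tail3 z'.
Proof. by apply/rowP=> [[[|[|[|?]]] ?]] //; rewrite !mxE /=; ring. Qed.

Section Basis.
Variables (R : fieldType) (ga l m : R).
Hypothesis hd : 4 - ga != 0.
Local Notation b := (bvec ga l m).
Local Notation P := (Pbasis ga l m).

Ltac mx33 := apply/matrixP=> [[[|[|[|?]]] ?]] [[|[|[|?]]] ?] //;
  rewrite ?(mxE, big_ord_recl, big_ord0) /= -?val_eqE /= ?inordK //=.

Lemma Pbasis_col0 : P *m delta_mx 0 0 = b.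
Proof.
by apply/colP=> [[[|[|[|?]]] ?]] //; rewrite !(mxE, big_ord_recl, big_ord0) /=; ring.
Qed.

Lemma Pbasis_unit : P \in unitmx.
Proof.
pose Q : 'M[R]_3 := \matrix_(i < 3, j < 3)
  nth 0 (nth [::] [:: [:: (4 - ga)^-1; 0; 0]; [:: - (l + 2) / (4 - ga); 1; 0];
      [:: - (m + 2) / (4 - ga); 0; 1]] i) j.
have PQ : P *m Q = 1%:M by rewrite /Q /Pbasis /bvec; mx33; field.
by case: (mulmx1_unit PQ).
Qed.

Lemma nuT_conj z : nuT ga l m z = P * transv (delta_mx 0 0) (tail3 z) * invmx P.
Proof. by rewrite /nuT /transv /tail3 /rv3; congr (_ * _ * _); mx33; ring. Qed.

Lemma nuT_transv z w : w *m P = tail3 z -> nuT ga l m z = transv b w.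
Proof.
move=> hw; have PE : P *m transv (delta_mx 0 0) (tail3 z) = transv b w *m P.
  by rewrite /transv mulmxDr mulmx1 mulmxA Pbasis_col0 -hw mulmxDl mul1mx mulmxA.
by rewrite nuT_conj -!mulmxE PE mulmxK // Pbasis_unit.
Qed.

Lemma form_bvec_eq0 (v : 'rV_3) c : (- v) *m P = tail3 c -> v *m b = 0.
Proof.
move=> hv; apply: oppr_inj; rewrite oppr0 -mulNmx -Pbasis_col0 mulmxA hv -colE.
by apply/matrixP=> k k'; rewrite !mxE.
Qed.

Lemma nuT_lincomb (v v' : 'rV_3) c c' X Y :
  (- v) *m P = tail3 c -> (- v') *m P = tail3 c' ->
  nuT ga l m (X *: c + Y *: c') = transv b (- (X *: v + Y *: v')).
Proof.
move=> hv hv'; apply: nuT_transv.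
by rewrite opprD -!scalerN mulmxDl -!scalemxAl !mulNmx -!mulNmx hv hv' tail3D.
Qed.

End Basis.

Section Forms.
Variables (R : fieldType) (al be ga l m : R).
Hypothesis hlm : l * m = ga.

Lemma Pbasis_form1 : 8 - 2 * al - 2 * be - 2 * ga - (al * l + be * m) = 0 ->
  (- rv3 2 (- al) (- be)) *m Pbasis ga l m = tail3 (c1 al be).
Proof.
move=> hD; apply/rowP=> [[[|[|[|?]]] ?]] //;
  rewrite !(mxE, big_ord_recl, big_ord0) /= ?inordK //=; [|ring|ring].
by rewrite addr0 -[RHS]oppr0 -hD; ring.
Qed.

Lemma Pbasis_form2 : (- rv3 (-1) 2 (- l)) *m Pbasis ga l m = tail3 (c2 l).
Proof.
by apply/rowP=> [[[|[|[|?]]] ?]] //;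
  rewrite !(mxE, big_ord_recl, big_ord0) /= ?inordK //= -?hlm; ring.
Qed.

Lemma Pbasis_form3 : (- rv3 (-1) (- m) 2) *m Pbasis ga l m = tail3 (c3 m).
Proof.
by apply/rowP=> [[[|[|[|?]]] ?]] //;
  rewrite !(mxE, big_ord_recl, big_ord0) /= ?inordK //= -?hlm; ring.
Qed.

End Forms.

Lemma gen_group_exp (R : fieldType) (S : seq 'M[R]_3) A n :
  gen_group S A -> gen_group S (A ^+ n).
Proof.
move=> GA; elim: n => [|n IH]; first by rewrite expr0; exact: gg_one.
by rewrite exprS; apply: gg_mul.
Qed.

Section TwistedReflections.
Variables (R : fieldType) (ga l m : R).
Hypothesis hd : 4 - ga != 0.
Variables (i j : 'I_3) (v v' : 'rV[R]_3) (c c' : 'rV[R]_2) (p q la1 la2 : R).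
Hypotheses (hv : v 0 i = 2) (hv' : v' 0 j = 2) (hv'i : v' 0 i = - p) (hvj : v 0 j = - q).
Hypotheses (hc : (- v) *m Pbasis ga l m = tail3 c)
  (hc' : (- v') *m Pbasis ga l m = tail3 c').
Local Notation N := (nuT ga l m).
Local Notation XY n := (twist_coords p q la1 la2 n).

Lemma expr_twisted_refl3 n :
  (refl3 i v * N (la1 *: c) * (refl3 j v' * N (la2 *: c'))) ^+ n
  = (refl3 i v * refl3 j v') ^+ n * N ((XY n).1 *: c + (XY n).2 *: c').
Proof.
have N1 : N (la1 *: c) = transv (bvec ga l m) (- (la1 *: v)).
  by have := nuT_lincomb hd la1 0 hc hc'; rewrite !scale0r !addr0.
have N2 : N (la2 *: c') = transv (bvec ga l m) (- (la2 *: v')).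
  by have := nuT_lincomb hd 0 la2 hc hc'; rewrite !scale0r !add0r.
have scaled_b u x : u *m bvec ga l m = 0 -> - (x *: u) *m bvec ga l m = 0.
  by move=> ub; rewrite mulNmx -scalemxAl ub scaler0 oppr0.
rewrite N1 N2 expr_twist ?refl3_fixed ?scaled_b ?(form_bvec_eq0 hc) ?(form_bvec_eq0 hc') //.
by rewrite (twist_form_refl3 _ _ hv hv' hv'i hvj) (nuT_lincomb hd _ _ hc hc').
Qed.

Lemma gen_group_expr_twisted_refl3 (S : seq 'M[R]_3) n :
  gen_group S (refl3 i v) -> gen_group S (refl3 j v') ->
  gen_group S (N (la1 *: c)) -> gen_group S (N (la2 *: c')) ->
  gen_group S (N ((XY n).1 *: c + (XY n).2 *: c'))
  /\ (refl3 i v * N (la1 *: c) * (refl3 j v' * N (la2 *: c'))) ^+ n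
      = (refl3 i v * refl3 j v') ^+ n * N ((XY n).1 *: c + (XY n).2 *: c').
Proof.
move=> Gs Gt G1 G2; split; last exact: expr_twisted_refl3.
rewrite -[N _]mul1r.
rewrite -(expr_involutionsK n (refl3_involutive hv) (refl3_involutive hv')).
rewrite -mulrA -expr_twisted_refl3.
apply: gg_mul; apply: gen_group_exp; first exact: gg_mul.
by apply: gg_mul; apply: gg_mul.
Qed.

End TwistedReflections.

Lemma expr_gcdn_eq1 (R : pzRingType) (z : R) a b : (0 < a)%N ->
  z ^+ a = 1 -> z ^+ b = 1 -> z ^+ gcdn a b = 1.
Proof.
move=> a0 za zb; have [k _ /dvdnP [h hh]] := Bezoutl b a0.
have := congr1 (fun e => z ^+ e) hh; rewrite /= exprD mulnC exprM zb expr1n mulr1.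
by move=> ->; rewrite mulnC exprM za expr1n.
Qed.

Lemma sqr_eq1_of_norm1 (C : numClosedFieldType) (w : C) :
  `|w| = 1 -> 'Re w ^+ 2 = 1 -> w ^+ 2 = 1.
Proof.
move=> nw Rew; have /eqP := normC2_Re_Im w; rewrite nw Rew expr1n -subr_eq0.
rewrite opprD addrA subrr add0r oppr_eq0 expf_eq0 /= => /eqP Imw.
by rewrite [w]Crect Imw mulr0 addr0.
Qed.

Lemma sqrRe_rootN1_neq1 (C : numClosedFieldType) (r k : nat) :
  (1 < r)%N -> coprime k r -> 'Re (r.-root (-1) ^+ k) ^+ 2 != 1 :> C.
Proof.
move=> r1 kr; set z := r.-root (-1 : C); apply/eqP => Re1.
have r0 : (0 < r)%N by apply: ltnW.
have zr : z ^+ r = -1 by rewrite /z rootCK.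
have nz : `|z| = 1.
  by apply/eqP; rewrite -(@pexpr_eq1 _ _ r) // -normrX zr normrN normr1.
have zk2 : (z ^+ 2) ^+ k = 1.
  by rewrite -exprM mulnC exprM sqr_eq1_of_norm1 // normrX nz expr1n.
have zr2 : (z ^+ 2) ^+ r = 1 by rewrite -exprM mulnC exprM zr sqrrN expr1n.
have := expr_gcdn_eq1 r0 zr2 zk2; rewrite gcdnC (eqP kr) expr1.
move/eqP; rewrite sqrf_eq1 => /orP [] /eqP z1.
  by move: zr; rewrite z1 expr1n => /eqP; rewrite -subr_eq0 opprK -mulr2n pnatr_eq0.
by have := rootC_lt0 (-1 : C) r1; rewrite -/z z1 ltrN10.
Qed.

Lemma bn_twist_coords (R : comNzRingType) (x la mu : R) (c d : 'rV_2) n :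
  bn x la mu c d n.+1 = (twist_coords 1 x la mu n.+1).1 *: c
                        + (twist_coords 1 x la mu n.+1).2 *: d.
Proof.
rewrite twist_coordsE /bn !mul1r uev_predS /=.
by case: (odd n) => /=; apply/rowP=> k; rewrite !mxE; ring.
Qed.

Lemma bn''_twist_coords (R : comNzRingType) (ga l m la2 la3 : R) n : l * m = ga ->
  bn'' ga l m la2 la3 n.+1 = (twist_coords m l la2 la3 n.+1).1 *: c2 l
                             + (twist_coords m l la2 la3 n.+1).2 *: c3 m.
Proof.
move=> hlm; rewrite twist_coordsE /bn'' [m * l]mulrC hlm uev_predS /=.
by case: (odd n) => /=; apply/rowP=> k; rewrite !mxE; ring.
Qed.

Theorem proposition3 (C : numClosedFieldType)
  (p q r k1 k2 k3 : nat)
  (hp : (3 <= p)%N) (hq : (3 <= q)%N) (hr : (3 <= r)%N)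
  (hk1 : coprime k1 p) (hk2 : coprime k2 q) (hk3 : coprime k3 r)
  (al be ga l m : C)
  (hal : al = 4 * ('Re (p.-root (-1) ^+ k1)) ^+ 2)
  (hbe : be = 4 * ('Re (q.-root (-1) ^+ k2)) ^+ 2)
  (hga : ga = 4 * ('Re (r.-root (-1) ^+ k3)) ^+ 2)
  (hlm : l * m = ga)
  (K : {pred C}) (hK : GRing.divring_closed K)
  (Kal : al \in K) (Kbe : be \in K) (Kga : ga \in K) (Kl : l \in K) (Km : m \in K)
  (hDelta : 8 - 2 * al - 2 * be - 2 * ga - (al * l + be * m) = 0)
  (la1 la2 la3 : C) (Kla1 : la1 \in K) (Kla2 : la2 \in K) (Kla3 : la3 \in K)
  (hN1 : inN al be ga l m (la1 *: c1 al be))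
  (hN2 : inN al be ga l m (la2 *: c2 l))
  (hN3 : inN al be ga l m (la3 *: c3 m)) :
  let s1 := sg1 al be in let s2 := sg2 l in let s3 := sg3 m in
  let s1' := s1 * nuT ga l m (la1 *: c1 al be) in
  let s2' := s2 * nuT ga l m (la2 *: c2 l) in
  let s3' := s3 * nuT ga l m (la3 *: c3 m) in
  forall n : nat, (1 <= n)%N ->
    [/\ inN al be ga l m (bn al la1 la2 (c1 al be) (c2 l) n)
        /\ (s1' * s2') ^+ n = (s1 * s2) ^+ n * nuT ga l m (bn al la1 la2 (c1 al be) (c2 l) n),
        inN al be ga l m (bn be la1 la3 (c1 al be) (c3 m) n)
        /\ (s1' * s3') ^+ n = (s1 * s3) ^+ n * nuT ga l m (bn be la1 la3 (c1 al be) (c3 m) n)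
      & inN al be ga l m (bn'' ga l m la2 la3 n)
        /\ (s2' * s3') ^+ n = (s2 * s3) ^+ n * nuT ga l m (bn'' ga l m la2 la3 n)].
Proof.
move=> s1 s2 s3 s1' s2' s3' [//|n] _.
have hd : 4 - ga != 0.
  rewrite hga -{1}[4]mulr1 -mulrBr mulf_neq0 ?pnatr_eq0 // subr_eq0 eq_sym.
  exact: sqrRe_rootN1_neq1 (ltnW hr) hk3.
have G1 : Ggrp al be l m s1 by apply: gg_gen; rewrite !inE eqxx.
have G2 : Ggrp al be l m s2 by apply: gg_gen; rewrite !inE eqxx orbT.
have G3 : Ggrp al be l m s3 by apply: gg_gen; rewrite !inE eqxx !orbT.
have F1 := Pbasis_form1 hDelta.
have F2 := Pbasis_form2 hlm.
have F3 := Pbasis_form3 hlm.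
rewrite !bn_twist_coords bn''_twist_coords //.
split; apply: gen_group_expr_twisted_refl3 => //; by rewrite /rv3 !mxE ?inordK.
Qed.
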